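(* In system $\mathscr{E}$: if $\Phi\triangleright\Gamma\vdash^{(b,e,m,f)}t:\sigma$ and $t\to_h t'$ by a step of kind $\mathcal{R}\in\{b,e,m\}$, then there is $\Phi'\triangleright\Gamma\vdash^{(b',e',m',f)}t':\sigma$ where: if $\mathcal{R}=b$ then $b'=b-1$, $e'=e$, $m'=m$; if $\mathcal{R}=e$ then $b'=b$, $e'=e-1$, $m'=m$; if $\mathcal{R}=m$ then $b'=b$, $e'=e$, $m'=m-1$.
   Context: Pair pattern calculus: patterns $p,q ::= x\mid\langle p,q\rangle$ (linear); $\mathrm{var}(p)$ = variables of $p$; $p\# q$ means disjoint variables. Terms $t,u ::= x\mid\lambda p.t\mid\langle t,u\rangle\mid t\,u\mid t[p/u]$, $\mathrm{var}(p)$ bound in $t$ in $\lambda p.t$ and $t[p/u]$; $\mathrm{fv}$ as usual; terms modulo $\alpha$. List contexts $L::=\Box\mid L[p/u]$, $L\langle t\rangle$ plugging (possibly capturing), $\mathrm{bv}(L)$ variables bound by $L$; $t\{x/u\}$ capture-avoiding substitution; $\mathrm{abs}(t)$ iff $t=L\langle\lambda p.u\rangle$. Head reduction ($t\not\to_h$: no $u$ with $t\to_h u$): (b) $L\langle\lambda p.t\rangle u\to_h L\langle t[p/u]\rangle$ if $\mathrm{bv}(L)\cap\mathrm{fv}(u)=\emptyset$; (m) $t[\langle p_1,p_2\rangle/L\langle\langle u_1,u_2\rangle\rangle]\to_h L\langle t[p_1/u_1][p_2/u_2]\rangle$ if $t\not\to_h$ and $\mathrm{bv}(L)\cap\mathrm{fv}(t)=\emptyset$;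 (e) $t[x/u]\to_h t\{x/u\}$ if $t\not\to_h$; closure: $\lambda p.t\to_h\lambda p.t'$ if $t\to_h t'$; $tu\to_h t'u$ if $t\to_h t'$ and not $\mathrm{abs}(t)$; $t[p/u]\to_h t'[p/u]$ if $t\to_h t'$; $t[p/u]\to_h t[p/u']$ if $t\not\to_h$, $p$ not a variable, $u\to_h u'$. The kind of a step is the base rule (b), (e) or (m) it uses. System $\mathscr{E}$. Types: tight types $\mathtt{t} ::= \bullet_{\mathcal{N}}\mid\bullet_{\mathcal{M}}$; types $\sigma ::= \mathtt{t}\mid \mathcal{A}_1\times\mathcal{A}_2\mid \mathcal{A}\to\sigma$; multi-types $\mathcal{A} ::= [\sigma_k]_{k\in K}$ (finite, possibly empty). Contexts map variables to multi-types, $\mathrm{dom}(\Gamma)$ = variables with non-empty multi-type; $\wedge$ pointwise multiset union; $\Gamma|_p$ restriction to $\mathrm{var}(p)$; $\Gamma\setminus\mathrm{var}(p)$ removal. $\mathrm{tight}(\sigma)$ iff $\sigma\in\{\bullet_{\mathcal{N}},\bullet_{\mathcal{M}}\}$, extended elementwise. Rules: (pat_v) $x:\mathcal{A}\Vdash^{(1,0,0)} x:\mathcal{A}$. (pat_×) from $\Gamma\Vdash^{(e_p,m_p,f_p)}p:\mathcal{A}$, $\Delta\Vdash^{(e_q,m_q,f_q)}q:\mathcal{B}$, $p\#q$ infer $\Gamma\wedge\Delta\Vdash^{(e_p+e_q,1+m_p+m_q,f_p+f_q)}\langle p,q\rangle:[\mathcal{A}\times\mathcal{B}]$. (pat_p)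 if $\mathrm{dom}(\Gamma)\subseteq\mathrm{var}(\langle p,q\rangle)$ and $\mathrm{tight}(\Gamma)$ then $\Gamma\Vdash^{(0,0,1)}\langle p,q\rangle:[\bullet_{\mathcal{N}}]$. (ax) $x:[\sigma]\vdash^{(0,0,0,0)}x:\sigma$. (abs) from $\Gamma\vdash^{(b,e,m,f)}t:\sigma$ and $\Gamma|_p\Vdash^{(e_p,m_p,f_p)}p:\mathcal{A}$ infer $\Gamma\setminus\mathrm{var}(p)\vdash^{(b+1,e+e_p,m+m_p,f+f_p)}\lambda p.t:\mathcal{A}\to\sigma$. (abs_p) from $\Gamma\vdash^{(b,e,m,f)}t:\mathtt{t}$ ($\mathtt{t}$ tight) and $\mathrm{tight}(\Gamma|_p)$ infer $\Gamma\setminus\mathrm{var}(p)\vdash^{(b,e,m,f+1)}\lambda p.t:\bullet_{\mathcal{M}}$. (many) from $(\Gamma_k\vdash^{(b_k,e_k,m_k,f_k)}t:\sigma_k)_{k\in K}$ infer $\wedge_k\Gamma_k\vdash^{(\sum b_k,\sum e_k,\sum m_k,\sum f_k)}t:[\sigma_k]_{k\in K}$. (app) from $\Gamma\vdash^{(b_t,e_t,m_t,f_t)}t:\mathcal{A}\to\sigma$, $\Delta\vdash^{(b_u,e_u,m_u,f_u)}u:\mathcal{A}$ infer $\Gamma\wedge\Delta\vdash^{(b_t+b_u,e_t+e_u,m_t+m_u,f_t+f_u)}t\,u:\sigma$. (app_p) from $\Gamma\vdash^{(b,e,m,f)}t:\bullet_{\mathcal{N}}$ infer $\Gamma\vdash^{(b,e,m,f+1)}t\,u:\bullet_{\mathcal{N}}$.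 (pair) from $\Gamma\vdash^{(b_t,e_t,m_t,f_t)}t:\mathcal{A}$, $\Delta\vdash^{(b_u,e_u,m_u,f_u)}u:\mathcal{B}$ infer $\Gamma\wedge\Delta\vdash^{(b_t+b_u,e_t+e_u,m_t+m_u,f_t+f_u)}\langle t,u\rangle:\mathcal{A}\times\mathcal{B}$. (pair_p) $\vdash^{(0,0,0,1)}\langle t,u\rangle:\bullet_{\mathcal{M}}$. (match) from $\Gamma\vdash^{(b_t,e_t,m_t,f_t)}t:\sigma$, $\Gamma|_p\Vdash^{(e_p,m_p,f_p)}p:\mathcal{A}$, $\Delta\vdash^{(b_u,e_u,m_u,f_u)}u:\mathcal{A}$ infer $(\Gamma\setminus\mathrm{var}(p))\wedge\Delta\vdash^{(b_t+b_u,e_t+e_u+e_p,m_t+m_u+m_p,f_t+f_u+f_p)}t[p/u]:\sigma$. *)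

(* Terms are represented with de Bruijn indices (terms modulo alpha):
   a pattern p binds (psize p) consecutive indices 0 .. psize p - 1,
   assigned to the leaves of p from left to right; free indices of the body
   are shifted by psize p. *)
From Stdlib Require Import List Arith.
Import ListNotations.

Inductive pat : Type :=
| PVar : pat
| PPair : pat -> pat -> pat.      (* <p, q>  (linear by construction) *)

Fixpoint psize (p : pat) : nat :=
  match p with PVar => 1 | PPair p q => psize p + psize q end.

Inductive term : Type :=
| Var : nat -> term
| Lam : pat -> term -> term
| Pair : term -> term -> term
| App : term -> term -> term
| Sub : term -> pat -> term -> term.     (* t[p/u]         *)

Fixpoint lift (d c : nat) (t : term) : term :=
  match t with
  | Var n => if c <=? n then Var (n + d) else Var n
  | Lam p s => Lam p (lift d (c + psize p) s)
  | Pair a b => Pair (lift d c a) (lift d c b)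
  | App a b => App (lift d c a) (lift d c b)
  | Sub s p u => Sub (lift d (c + psize p) s) p (lift d c u)
  end.

(* capture-avoiding substitution of u for index c (u lives outside the
   c binders), removing that binder *)
Fixpoint subst (c : nat) (u : term) (t : term) : term :=
  match t with
  | Var n => if n =? c then lift c 0 u
             else if c <? n then Var (n - 1) else Var n
  | Lam p s => Lam p (subst (c + psize p) u s)
  | Pair a b => Pair (subst c u a) (subst c u b)
  | App a b => App (subst c u a) (subst c u b)
  | Sub s p w => Sub (subst (c + psize p) u s) p (subst c u w)
  end.

(* list contexts L ::= [] | L[p/u];  the head of the list is the outermost
   explicit substitution:  plug ((p,u)::L) w = (plug L w)[p/u] *)
Definition lctx := list (pat * term).

Fixpoint plug (L : lctx) (w : term) : term :=
  match L with
  | [] => w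
  | (p, u) :: L' => Sub (plug L' w) p u
  end.

Fixpoint bvL (L : lctx) : nat :=
  match L with [] => 0 | (p, _) :: L' => psize p + bvL L' end.

Definition is_abs (t : term) : Prop :=
  exists L p s, t = plug L (Lam p s).

Inductive kind : Type := KB | KE | KM.

(* Defined by structural
   recursion on t (the negative premises "s is head normal" only concern
   strict subterms). The side conditions bv(L) # fv(...) of the named
   presentation become index shifts. *)
Fixpoint hred (t : term) (k : kind) (t' : term) {struct t} : Prop :=
  match t with
  | Var _ => False
  | Pair _ _ => False
  | Lam p s => exists s', hred s k s' /\ t' = Lam p s'
  | App s u =>
      (k = KB /\ exists L p s0,
          s = plug L (Lam p s0) /\
          t' = plug L (Sub s0 p (lift (bvL L) 0 u)))
      \/
      (~ is_abs s /\ exists s', hred s k s' /\ t' = App s' u)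
  | Sub s p u =>
      (k = KM /\ (forall k0 s0, ~ hred s k0 s0) /\
        exists p1 p2 L u1 u2,
          p = PPair p1 p2 /\ u = plug L (Pair u1 u2) /\
          t' = plug L (Sub (Sub (lift (bvL L) (psize p1 + psize p2) s)
                                p1 (lift (psize p2) 0 u1))
                           p2 u2))
      \/
      (k = KE /\ (forall k0 s0, ~ hred s k0 s0) /\ p = PVar /\
        t' = subst 0 u s)
      \/
      (exists s', hred s k s' /\ t' = Sub s' p u)
      \/
      ((forall k0 s0, ~ hred s k0 s0) /\ p <> PVar /\
        exists u', hred u k u' /\ t' = Sub s p u')
  end.

(* multi-types are represented by lists, identified up to [mt_eqv] *)
Inductive ty : Type :=
| TN : ty
| TM : ty
| TProd : list ty -> list ty -> ty
| TArr : list ty -> ty -> ty.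

Definition mty := list ty.

(* equality of (multi-)types as multisets, recursively *)
Inductive ty_eqv : ty -> ty -> Prop :=
| teqv_N : ty_eqv TN TN
| teqv_M : ty_eqv TM TM
| teqv_prod A A' B B' : mt_eqv A A' -> mt_eqv B B' ->
    ty_eqv (TProd A B) (TProd A' B')
| teqv_arr A A' s s' : mt_eqv A A' -> ty_eqv s s' ->
    ty_eqv (TArr A s) (TArr A' s')
with mt_eqv : mty -> mty -> Prop :=
| meqv_nil : mt_eqv [] []
| meqv_cons s s' A B1 B2 : ty_eqv s s' -> mt_eqv A (B1 ++ B2) ->
    mt_eqv (s :: A) (B1 ++ s' :: B2).

Definition tight (s : ty) : Prop := s = TN \/ s = TM.
Definition tight_mty (A : mty) : Prop := Forall tight A.

Definition ctx := nat -> mty.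
Definition ctx_empty : ctx := fun _ => [].
Definition ctx_union (G D : ctx) : ctx := fun n => G n ++ D n.
Definition ctx_single (x : nat) (s : ty) : ctx :=
  fun n => if n =? x then [s] else [].
Definition restr (G : ctx) (p : pat) : list mty := map G (seq 0 (psize p)).
Definition remove (G : ctx) (p : pat) : ctx := fun n => G (n + psize p).
Definition ctx_eqv (G G' : ctx) : Prop := forall n, mt_eqv (G n) (G' n).

(* ---------- pattern typing  Gamma ||-^(e,m,f) p : A ----------
   the context of a pattern is the list of multi-types of its leaves *)
Inductive pty : list mty -> pat -> mty -> nat -> nat -> nat -> Prop :=
| pat_v A : pty [A] PVar A 1 0 0
| pat_x G D p q A B ep mp fp eq mq fq :
    pty G p A ep mp fp -> pty D q B eq mq fq ->
    pty (G ++ D) (PPair p q) [TProd A B] (ep + eq) (1 + mp + mq) (fp + fq)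
| pat_p G p q :
    length G = psize (PPair p q) -> Forall tight_mty G ->
    pty G (PPair p q) [TN] 0 0 1.

Inductive typed : ctx -> term -> ty -> nat -> nat -> nat -> nat -> Prop :=
| ty_ax x s : typed (ctx_single x s) (Var x) s 0 0 0 0
| ty_abs G t s p A b e m f ep mp fp :
    typed G t s b e m f -> pty (restr G p) p A ep mp fp ->
    typed (remove G p) (Lam p t) (TArr A s) (b + 1) (e + ep) (m + mp) (f + fp)
| ty_abs_p G t s p b e m f :
    typed G t s b e m f -> tight s -> Forall tight_mty (restr G p) ->
    typed (remove G p) (Lam p t) TM b e m (f + 1)
| ty_app G D t u A s bt et mt ft bu eu mu fu :
    typed G t (TArr A s) bt et mt ft -> typed_many D u A bu eu mu fu ->
    typed (ctx_union G D) (App t u) s (bt + bu) (et + eu) (mt + mu) (ft + fu)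
| ty_app_p G t u b e m f :
    typed G t TN b e m f -> typed G (App t u) TN b e m (f + 1)
| ty_pair G D t u A B bt et mt ft bu eu mu fu :
    typed_many G t A bt et mt ft -> typed_many D u B bu eu mu fu ->
    typed (ctx_union G D) (Pair t u) (TProd A B)
      (bt + bu) (et + eu) (mt + mu) (ft + fu)
| ty_pair_p t u : typed ctx_empty (Pair t u) TM 0 0 0 1
| ty_match G D t p u s A bt et mt ft ep mp fp bu eu mu fu :
    typed G t s bt et mt ft -> pty (restr G p) p A ep mp fp ->
    typed_many D u A bu eu mu fu ->
    typed (ctx_union (remove G p) D) (Sub t p u) s
      (bt + bu) (et + eu + ep) (mt + mu + mp) (ft + fu + fp)
(* multisets are represented by lists: judgments are identified up to
   multiset equality of contexts and types (counters unchanged) *)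
| ty_conv G G' t s s' b e m f :
    typed G t s b e m f -> ctx_eqv G G' -> ty_eqv s s' ->
    typed G' t s' b e m f
with typed_many : ctx -> term -> mty -> nat -> nat -> nat -> nat -> Prop :=
| many_nil t : typed_many ctx_empty t [] 0 0 0 0
| many_cons G D t s A b e m f b' e' m' f' :
    typed G t s b e m f -> typed_many D t A b' e' m' f' ->
    typed_many (ctx_union G D) t (s :: A) (b + b') (e + e') (m + m') (f + f').

(* Closure steps follow from the induction hypothesis once a
   derivation is inverted up to the multiset conversion rule.  At the root, the list context [L]
   around the redex is retyped unchanged and the redex loses exactly one rule: a (b) step turns
   (app) of an (abs) into a (match), losing the b-count of (abs); an (m) step splits the (pat_x)
   typing of <p1,p2> into two (match) rules, losing the m-count of (pat_x); an (e) step is the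
   substitution lemma, where the e-count of (pat_v) disappears.  The persistent rules cannot type
   a root redex, as they would give its abstraction or pair a tight type it cannot have. *)

From Pilot Require Import Defs.
From Stdlib Require Import List Arith Lia Permutation.
From Stdlib Require Import RelationClasses Morphisms FunctionalExtensionality.
Import ListNotations.

(** * Multiset equivalence of types *)

Fixpoint ty_eqv_refl (s : ty) : ty_eqv s s :=
  let fix mt_eqv_refl (A : mty) : mt_eqv A A :=
    match A with
    | [] => meqv_nil
    | x :: A' => meqv_cons x x A' [] A' (ty_eqv_refl x) (mt_eqv_refl A')
    end in
  match s with
  | TN => teqv_N
  | TM => teqv_M
  | TProd A B => teqv_prod A A B B (mt_eqv_refl A) (mt_eqv_refl B)
  | TArr A s' => teqv_arr A A s' s' (mt_eqv_refl A) (ty_eqv_refl s')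
  end.

Lemma mt_eqv_iff A B :
  mt_eqv A B <-> exists B', Permutation B B' /\ Forall2 ty_eqv A B'.
Proof.
  split.
  - induction 1 as [|s s' A B1 B2 Hs _ (B' & HB' & HAB')].
    + exists []; auto.
    + exists (s' :: B'). split; [|auto].
      rewrite <- Permutation_middle. auto.
  - revert B. induction A as [|a A IH]; intros B (B' & HB & HAB).
    + inversion HAB; subst. apply Permutation_sym, Permutation_nil in HB as ->.
      constructor.
    + inversion HAB as [|? b ? B'' Hab HAB']; subst.
      assert (Hb : In b B) by (apply (Permutation_in _ (Permutation_sym HB)); left; auto).
      apply in_split in Hb as (B1 & B2 & ->).
      constructor; [exact Hab|]. apply IH. exists B''. split; [|exact HAB'].
      apply (Permutation_app_inv _ _ [] _ b). exact HB.
Qed.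

Lemma Permutation_mt_eqv A B : Permutation A B -> mt_eqv A B.
Proof.
  intros HAB. apply mt_eqv_iff. exists A. split; [now symmetry|]. clear.
  induction A; constructor; auto using ty_eqv_refl.
Qed.

Lemma mt_eqv_app A A' B B' : mt_eqv A A' -> mt_eqv B B' -> mt_eqv (A ++ B) (A' ++ B').
Proof.
  rewrite !mt_eqv_iff. intros (X & HX & HAX) (Y & HY & HBY).
  exists (X ++ Y). auto using Permutation_app, Forall2_app.
Qed.

Lemma mt_eqv_elt_inv B1 x B2 C :
  mt_eqv (B1 ++ x :: B2) C ->
  exists C1 y C2, C = C1 ++ y :: C2 /\ ty_eqv x y /\ mt_eqv (B1 ++ B2) (C1 ++ C2).
Proof.
  rewrite mt_eqv_iff. intros (C' & HC & HBC).
  apply Forall2_app_inv_l in HBC as (l1 & l2' & H1 & H2 & ->).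
  inversion H2 as [|? y ? l2 Hxy H2']; subst.
  assert (Hy : In y C) by (apply (Permutation_in _ (Permutation_sym HC)), in_elt).
  apply in_split in Hy as (C1 & C2 & ->).
  exists C1, y, C2. repeat split; [exact Hxy|].
  apply mt_eqv_iff. exists (l1 ++ l2). split.
  - eapply Permutation_app_inv. exact HC.
  - apply Forall2_app; assumption.
Qed.

Lemma mt_eqv_elt B1 B2 A x y :
  mt_eqv (B1 ++ B2) A -> ty_eqv x y -> mt_eqv (B1 ++ x :: B2) (y :: A).
Proof.
  rewrite !mt_eqv_iff. intros (A' & HA & HBA) Hxy.
  apply Forall2_app_inv_l in HBA as (l1 & l2 & H1 & H2 & ->).
  exists (l1 ++ y :: l2). split.
  - rewrite <- Permutation_middle. auto.
  - apply Forall2_app; auto.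
Qed.

Scheme ty_eqv_mut := Induction for ty_eqv Sort Prop
with mt_eqv_mut := Induction for mt_eqv Sort Prop.
Combined Scheme ty_mt_eqv_ind from ty_eqv_mut, mt_eqv_mut.

Lemma ty_mt_eqv_sym :
  (forall s s', ty_eqv s s' -> ty_eqv s' s) /\ (forall A B, mt_eqv A B -> mt_eqv B A).
Proof. apply ty_mt_eqv_ind; intros; try constructor; auto using mt_eqv_elt. Qed.

Lemma ty_mt_eqv_trans :
  (forall s s', ty_eqv s s' -> forall s'', ty_eqv s' s'' -> ty_eqv s s'') /\
  (forall A B, mt_eqv A B -> forall C, mt_eqv B C -> mt_eqv A C).
Proof.
  apply ty_mt_eqv_ind; auto.
  - intros A A' B B' _ IHA _ IHB s'' H. inversion H; subst. constructor; auto.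
  - intros A A' s s' _ IHA _ IHs s'' H. inversion H; subst. constructor; auto.
  - intros s s' A B1 B2 _ IHs _ IHA C H.
    apply mt_eqv_elt_inv in H as (C1 & y & C2 & -> & Hy & HC). constructor; auto.
Qed.

#[export] Instance ty_eqv_Equivalence : Equivalence ty_eqv.
Proof.
  split.
  - exact ty_eqv_refl.
  - exact (proj1 ty_mt_eqv_sym).
  - intros s1 s2 s3 H12 H23. exact (proj1 ty_mt_eqv_trans _ _ H12 _ H23).
Qed.

#[export] Instance mt_eqv_Equivalence : Equivalence mt_eqv.
Proof.
  split.
  - intro A. apply Permutation_mt_eqv. reflexivity.
  - exact (proj2 ty_mt_eqv_sym).
  - intros A1 A2 A3 H12 H23. exact (proj2 ty_mt_eqv_trans _ _ H12 _ H23).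
Qed.

#[export] Instance ctx_eqv_Equivalence : Equivalence ctx_eqv.
Proof.
  split; repeat intro; [reflexivity | symmetry | etransitivity]; eauto.
Qed.

Lemma ty_eqv_TN_inv x : ty_eqv TN x -> x = TN.
Proof. inversion 1; reflexivity. Qed.

Lemma ty_eqv_TM_inv x : ty_eqv TM x -> x = TM.
Proof. inversion 1; reflexivity. Qed.

Lemma ty_eqv_TArr_inv A s x :
  ty_eqv (TArr A s) x -> exists A' s', x = TArr A' s' /\ mt_eqv A A' /\ ty_eqv s s'.
Proof. inversion 1; eauto. Qed.

Lemma ty_eqv_TProd_inv A B x :
  ty_eqv (TProd A B) x -> exists A' B', x = TProd A' B' /\ mt_eqv A A' /\ mt_eqv B B'.
Proof. inversion 1; eauto. Qed.

(** * Contexts *)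

Definition ctx_lift (d c : nat) (G : ctx) : ctx :=
  fun n => if n <? c then G n else if n <? c + d then [] else G (n - d).

Definition ctx_drop (x : nat) (G : ctx) : ctx :=
  fun n => if n <? x then G n else G (S n).

Ltac case_nat :=
  repeat match goal with
  | |- context [?a <? ?b] => destruct (Nat.ltb_spec a b)
  | |- context [?a =? ?b] => destruct (Nat.eqb_spec a b)
  | |- context [?a <=? ?b] => destruct (Nat.leb_spec a b)
  end; try lia.

Ltac ctx_pointwise :=
  unfold ctx_lift, ctx_drop, Defs.remove, ctx_union, ctx_empty, ctx_single; case_nat;
  simpl; rewrite ?app_nil_r; try reflexivity; try solve [repeat (f_equal; try lia)].

Ltac ctx_arith := let n := fresh "n" in extensionality n; ctx_pointwise.

Lemma ctx_union_empty_r G : ctx_union G ctx_empty = G.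
Proof. ctx_arith. Qed.

Lemma ctx_union_assoc G1 G2 G3 :
  ctx_union G1 (ctx_union G2 G3) = ctx_union (ctx_union G1 G2) G3.
Proof. extensionality n. apply app_assoc. Qed.

Lemma ctx_union_comm G D : ctx_eqv (ctx_union G D) (ctx_union D G).
Proof. intro n. apply Permutation_mt_eqv, Permutation_app_comm. Qed.

Lemma ctx_union_interchange G1 G2 D1 D2 :
  ctx_eqv (ctx_union (ctx_union G1 G2) (ctx_union D1 D2))
          (ctx_union (ctx_union G1 D1) (ctx_union G2 D2)).
Proof.
  intro n. apply Permutation_mt_eqv. unfold ctx_union.
  rewrite <- !app_assoc. apply Permutation_app_head. apply Permutation_app_swap_app.
Qed.

#[export] Instance ctx_union_Proper : Proper (ctx_eqv ==> ctx_eqv ==> ctx_eqv) ctx_union.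
Proof. intros G G' HG D D' HD n. apply mt_eqv_app; auto. Qed.

#[export] Instance ctx_lift_Proper d c : Proper (ctx_eqv ==> ctx_eqv) (ctx_lift d c).
Proof. intros G G' HG n. unfold ctx_lift. case_nat; auto. reflexivity. Qed.

Lemma ctx_lift_0 c D : ctx_lift 0 c D = D.
Proof. ctx_arith. Qed.

Lemma ctx_lift_empty d c : ctx_lift d c ctx_empty = ctx_empty.
Proof. ctx_arith. Qed.

Lemma ctx_lift_union d c G D :
  ctx_lift d c (ctx_union G D) = ctx_union (ctx_lift d c G) (ctx_lift d c D).
Proof. ctx_arith. Qed.

Lemma ctx_lift_single d c x s :
  ctx_lift d c (ctx_single x s) = ctx_single (if c <=? x then x + d else x) s.
Proof. destruct (Nat.leb_spec c x); ctx_arith. Qed.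

Lemma ctx_lift_lift0 d d' D : ctx_lift d 0 (ctx_lift d' 0 D) = ctx_lift (d' + d) 0 D.
Proof. ctx_arith. Qed.

Lemma ctx_lift_remove d c G p :
  ctx_lift d c (Defs.remove G p) = Defs.remove (ctx_lift d (c + psize p) G) p.
Proof. ctx_arith. Qed.

Lemma ctx_drop_union x G D :
  ctx_drop x (ctx_union G D) = ctx_union (ctx_drop x G) (ctx_drop x D).
Proof. ctx_arith. Qed.

Lemma remove_union_ctx_lift G D p :
  Defs.remove (ctx_union G (ctx_lift (psize p) 0 D)) p = ctx_union (Defs.remove G p) D.
Proof. ctx_arith. Qed.

Lemma remove_remove G p1 p2 :
  Defs.remove (Defs.remove G p1) p2 = Defs.remove G (PPair p1 p2).
Proof. ctx_arith. Qed.

Lemma restr_ext G G' p :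
  (forall n, n < psize p -> G n = G' n) -> restr G p = restr G' p.
Proof.
  intros H. apply map_ext_in. intros n Hn. apply in_seq in Hn. apply H. lia.
Qed.

Lemma restr_ctx_lift d c G p : psize p <= c -> restr (ctx_lift d c G) p = restr G p.
Proof. intros. apply restr_ext. intros. ctx_pointwise. Qed.

Lemma restr_union_ctx_lift G D p : restr (ctx_union G (ctx_lift (psize p) 0 D)) p = restr G p.
Proof. apply restr_ext. intros. ctx_pointwise. Qed.

(** * Patterns *)

Lemma app_inj_length {T} (l1 l2 l1' l2' : list T) :
  l1 ++ l2 = l1' ++ l2' -> length l1 = length l1' -> l1 = l1' /\ l2 = l2'.
Proof.
  revert l1'. induction l1 as [|x l1 IH]; intros [|x' l1'] H Hlen; try discriminate; auto.
  injection H as -> H. injection Hlen as Hlen. destruct (IH l1' H Hlen) as [-> ->]. auto.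
Qed.

Lemma map_seq_shift {T} (F : nat -> T) a n :
  map F (seq a n) = map (fun i => F (i + a)) (seq 0 n).
Proof.
  revert a. induction n as [|n IH]; intros a; simpl; [reflexivity|]. f_equal.
  rewrite IH, <- seq_shift, map_map. apply map_ext. intros. f_equal. lia.
Qed.

Lemma restr_PPair G p1 p2 :
  restr G (PPair p1 p2) = restr G p1 ++ restr (Defs.remove G p1) p2.
Proof. unfold restr. simpl. rewrite seq_app, map_app, (map_seq_shift G (0 + _)). reflexivity. Qed.

Lemma restr_length G p : length (restr G p) = psize p.
Proof. unfold restr. rewrite length_map, length_seq. reflexivity. Qed.

Lemma pty_length Gs p A e m f : pty Gs p A e m f -> length Gs = psize p.
Proof. induction 1; simpl; auto. rewrite length_app. lia. Qed.

Lemma pty_restr_PPair_inv G p1 p2 A e m f :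
  pty (restr G (PPair p1 p2)) (PPair p1 p2) A e m f ->
  (exists A1 A2 e1 m1 f1 e2 m2 f2,
     pty (restr G p1) p1 A1 e1 m1 f1 /\ pty (restr (Defs.remove G p1) p2) p2 A2 e2 m2 f2 /\
     A = [TProd A1 A2] /\ e = e1 + e2 /\ m = 1 + m1 + m2 /\ f = f1 + f2) \/
  A = [TN].
Proof.
  inversion 1 as [|Gs1 Gs2 ? ? A1 A2 e1 m1 f1 e2 m2 f2 H1 H2 Hsplit|]; subst;
    [left | right; reflexivity].
  rewrite restr_PPair in Hsplit.
  apply app_inj_length in Hsplit as [<- <-];
    [|rewrite restr_length; eapply pty_length; eassumption].
  do 8 eexists. repeat split; eassumption.
Qed.

Lemma pty_PPair_singleton Gs p1 p2 A e m f :
  pty Gs (PPair p1 p2) A e m f -> exists X, A = [X].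
Proof. inversion 1; eauto. Qed.

(** * Multi-type judgments *)

Lemma typed_counters G t s b e m f b' e' m' f' :
  typed G t s b e m f -> b = b' -> e = e' -> m = m' -> f = f' -> typed G t s b' e' m' f'.
Proof. intros; subst; auto. Qed.

Lemma typed_many_counters G t A b e m f b' e' m' f' :
  typed_many G t A b e m f -> b = b' -> e = e' -> m = m' -> f = f' ->
  typed_many G t A b' e' m' f'.
Proof. intros; subst; auto. Qed.

Lemma typed_many_nil_inv G t b e m f :
  typed_many G t [] b e m f -> G = ctx_empty /\ b = 0 /\ e = 0 /\ m = 0 /\ f = 0.
Proof. inversion 1; auto. Qed.

Lemma typed_many_cons_inv G t s A b e m f :
  typed_many G t (s :: A) b e m f ->
  exists G1 G2 b1 e1 m1 f1 b2 e2 m2 f2,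
    G = ctx_union G1 G2 /\ typed G1 t s b1 e1 m1 f1 /\ typed_many G2 t A b2 e2 m2 f2 /\
    b = b1 + b2 /\ e = e1 + e2 /\ m = m1 + m2 /\ f = f1 + f2.
Proof. inversion 1; subst. do 10 eexists. eauto 10. Qed.

Lemma typed_many_app_inv G t A1 A2 b e m f :
  typed_many G t (A1 ++ A2) b e m f ->
  exists G1 G2 b1 e1 m1 f1 b2 e2 m2 f2,
    G = ctx_union G1 G2 /\ typed_many G1 t A1 b1 e1 m1 f1 /\ typed_many G2 t A2 b2 e2 m2 f2 /\
    b = b1 + b2 /\ e = e1 + e2 /\ m = m1 + m2 /\ f = f1 + f2.
Proof.
  revert G b e m f. induction A1 as [|s A1 IH]; simpl; intros G b e m f H.
  - exists ctx_empty, G, 0, 0, 0, 0, b, e, m, f.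
    split; [extensionality n; reflexivity|]. split; [constructor | auto].
  - apply typed_many_cons_inv in H as (G1 & D & b1 & e1 & m1 & f1 & b2 & e2 & m2 & f2
                                        & -> & Hs & HA & -> & -> & -> & ->).
    apply IH in HA as (D1 & D2 & b3 & e3 & m3 & f3 & b4 & e4 & m4 & f4
                       & -> & H1 & H2 & -> & -> & -> & ->).
    exists (ctx_union G1 D1), D2. do 8 eexists.
    split; [apply ctx_union_assoc|]. split; [constructor; eauto|]. split; [eauto | lia].
Qed.

Lemma typed_many_singleton G t s b e m f :
  typed G t s b e m f -> typed_many G t [s] b e m f.
Proof.
  intros H. rewrite <- (ctx_union_empty_r G).
  eapply typed_many_counters; [econstructor; [exact H | constructor] | lia..].
Qed.

Lemma typed_many_singleton_inv G t s b e m f :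
  typed_many G t [s] b e m f -> typed G t s b e m f.
Proof.
  intros H. apply typed_many_cons_inv in H as (G1 & G2 & b1 & e1 & m1 & f1 & b2 & e2 & m2 & f2
                                                & -> & Hs & Hnil & -> & -> & -> & ->).
  apply typed_many_nil_inv in Hnil as (-> & -> & -> & -> & ->).
  rewrite ctx_union_empty_r. eapply typed_counters; [exact Hs | lia..].
Qed.

Lemma typed_many_Forall2 G t A A' b e m f :
  typed_many G t A b e m f -> Forall2 ty_eqv A A' -> typed_many G t A' b e m f.
Proof.
  intros H HA. revert A' HA. induction H; intros A' HA; inversion HA; subst; constructor.
  - eapply ty_conv; eauto. reflexivity.
  - auto.
Qed.

(* [typed_many] has no conversion rule, so reordering the multi-type only reorders the
   union of contexts up to [ctx_eqv]. *)
Lemma typed_many_Permutation G t A A' b e m f :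
  Permutation A A' -> typed_many G t A b e m f ->
  exists G', ctx_eqv G G' /\ typed_many G' t A' b e m f.
Proof.
  intros HA. revert G b e m f. induction HA; intros G b e m f H.
  - exists G. split; [reflexivity | exact H].
  - apply typed_many_cons_inv in H as (G1 & D & b1 & e1 & m1 & f1 & b2 & e2 & m2 & f2
                                        & -> & Hs & HA' & -> & -> & -> & ->).
    apply IHHA in HA' as (D' & HD & HA').
    exists (ctx_union G1 D'). split; [now rewrite HD|].
    constructor; assumption.
  - apply typed_many_cons_inv in H as (G1 & D & b1 & e1 & m1 & f1 & b2 & e2 & m2 & f2
                                        & -> & Hy & H & -> & -> & -> & ->).
    apply typed_many_cons_inv in H as (G2 & D2 & b3 & e3 & m3 & f3 & b4 & e4 & m4 & f4
                                        & -> & Hx & H & -> & -> & -> & ->).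
    exists (ctx_union G2 (ctx_union G1 D2)). split.
    + rewrite !ctx_union_assoc, (ctx_union_comm G1 G2). reflexivity.
    + eapply typed_many_counters; [constructor; [exact Hx | constructor; eassumption] | lia..].
  - apply IHHA1 in H as (G1 & HG1 & H). apply IHHA2 in H as (G2 & HG2 & H).
    exists G2. split; [etransitivity; eassumption | exact H].
Qed.

Lemma typed_many_conv {G t A A' b e m f} :
  typed_many G t A b e m f -> mt_eqv A A' ->
  exists G', ctx_eqv G G' /\ typed_many G' t A' b e m f.
Proof.
  intros H HA. apply mt_eqv_iff in HA as (A'' & HP & HF).
  apply (typed_many_Permutation _ _ A'' A'); [now symmetry|].
  eapply typed_many_Forall2; eassumption.
Qed.

(** * Shifting and substitution *)

Scheme typed_mut := Induction for typed Sort Prop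
with typed_many_mut := Induction for typed_many Sort Prop.
Combined Scheme typed_typed_many_ind from typed_mut, typed_many_mut.

Lemma typed_lift :
  (forall G t s b e m f, typed G t s b e m f ->
     forall d c, typed (ctx_lift d c G) (lift d c t) s b e m f) /\
  (forall G t A b e m f, typed_many G t A b e m f ->
     forall d c, typed_many (ctx_lift d c G) (lift d c t) A b e m f).
Proof.
  apply typed_typed_many_ind; intros; simpl;
    rewrite ?ctx_lift_union, ?ctx_lift_remove, ?ctx_lift_empty.
  - rewrite ctx_lift_single. destruct (c <=? x); constructor.
  - apply ty_abs; [auto | rewrite restr_ctx_lift by lia; assumption].
  - eapply ty_abs_p; [eauto | auto | rewrite restr_ctx_lift by lia; assumption].
  - econstructor; eauto.
  - constructor; auto.
  - econstructor; eauto.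
  - constructor.
  - eapply ty_match; [eauto | rewrite restr_ctx_lift by lia; eassumption | eauto].
  - eapply ty_conv; [eauto | apply ctx_lift_Proper; assumption | assumption].
  - constructor.
  - constructor; auto.
Qed.

Definition subst_ctx (x : nat) (G D : ctx) : ctx := ctx_union (ctx_drop x G) (ctx_lift x 0 D).

#[export] Instance subst_ctx_Proper x : Proper (ctx_eqv ==> ctx_eqv ==> ctx_eqv) (subst_ctx x).
Proof.
  intros G G' HG D D' HD. unfold subst_ctx. rewrite HD. apply ctx_union_Proper; [|reflexivity].
  intro n. unfold ctx_drop. case_nat; apply HG.
Qed.

Lemma subst_ctx_empty x : subst_ctx x ctx_empty ctx_empty = ctx_empty.
Proof. unfold subst_ctx. ctx_arith. Qed.

Lemma subst_ctx_0 G D : subst_ctx 0 G D = ctx_union (Defs.remove G PVar) D.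
Proof. unfold subst_ctx. ctx_arith. Qed.

Lemma subst_ctx_union x G1 G2 D1 D2 :
  ctx_eqv (subst_ctx x (ctx_union G1 G2) (ctx_union D1 D2))
          (ctx_union (subst_ctx x G1 D1) (subst_ctx x G2 D2)).
Proof. unfold subst_ctx. rewrite ctx_drop_union, ctx_lift_union. apply ctx_union_interchange. Qed.

Lemma subst_ctx_remove x G D p :
  subst_ctx x (Defs.remove G p) D = Defs.remove (subst_ctx (x + psize p) G D) p.
Proof. unfold subst_ctx. ctx_arith. Qed.

Lemma restr_subst_ctx x G D p : restr (subst_ctx (x + psize p) G D) p = restr G p.
Proof. apply restr_ext. intros. unfold subst_ctx. ctx_pointwise. Qed.

Lemma subst_ctx_single x y s D :
  subst_ctx x (ctx_single y s) D =
  if y =? x then ctx_lift x 0 D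
  else ctx_union (ctx_single (if x <? y then y - 1 else y) s) (ctx_lift x 0 D).
Proof.
  unfold subst_ctx. destruct (Nat.eqb_spec y x); [|destruct (Nat.ltb_spec x y)]; ctx_arith.
Qed.

Lemma typed_subst_Var x y s u D b e m f :
  typed_many D u (ctx_single y s x) b e m f ->
  typed (subst_ctx x (ctx_single y s) D) (subst x u (Var y)) s b e m f.
Proof.
  intros Hu. simpl. rewrite subst_ctx_single.
  unfold ctx_single in Hu. rewrite Nat.eqb_sym in Hu. destruct (y =? x).
  - apply typed_many_singleton_inv, (proj1 typed_lift) with (d := x) (c := 0) in Hu. exact Hu.
  - apply typed_many_nil_inv in Hu as (-> & -> & -> & -> & ->).
    rewrite ctx_lift_empty, ctx_union_empty_r.
    destruct (x <? y); constructor.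
Qed.

Lemma typed_subst :
  (forall G t s b e m f, typed G t s b e m f ->
     forall x u D bu eu mu fu, typed_many D u (G x) bu eu mu fu ->
     typed (subst_ctx x G D) (subst x u t) s (b + bu) (e + eu) (m + mu) (f + fu)) /\
  (forall G t A b e m f, typed_many G t A b e m f ->
     forall x u D bu eu mu fu, typed_many D u (G x) bu eu mu fu ->
     exists G', ctx_eqv G' (subst_ctx x G D) /\
       typed_many G' (subst x u t) A (b + bu) (e + eu) (m + mu) (f + fu)).
Proof.
  apply typed_typed_many_ind.
  - intros y s x u D bu eu mu fu Hu. apply typed_subst_Var, Hu.
  - intros G t s p A b e m f ep mp fp _ IH Hp x u D bu eu mu fu Hu. simpl.
    rewrite subst_ctx_remove.
    eapply typed_counters;
      [apply ty_abs; [apply IH, Hu | rewrite restr_subst_ctx; exact Hp] | lia..].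
  - intros G t s p b e m f _ IH Hs Hp x u D bu eu mu fu Hu. simpl.
    rewrite subst_ctx_remove.
    eapply typed_counters;
      [eapply ty_abs_p; [apply IH, Hu | exact Hs | rewrite restr_subst_ctx; exact Hp] | lia..].
  - intros G Dt t t' A s bt et mt ft bu eu mu fu _ IHt _ IHu x u D bw ew mw fw Hw. simpl.
    apply typed_many_app_inv in Hw as (D1 & D2 & b1 & e1 & m1 & f1 & b2 & e2 & m2 & f2
                                       & -> & H1 & H2 & -> & -> & -> & ->).
    destruct (IHu x u D2 _ _ _ _ H2) as (G' & HG' & HU).
    eapply ty_conv; [eapply typed_counters; [econstructor; [apply IHt, H1 | exact HU] | lia..]
                    | | reflexivity].
    rewrite HG'. symmetry. apply subst_ctx_union.
  - intros G t t' b e m f _ IH x u D bu eu mu fu Hu. simpl.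
    eapply typed_counters; [apply ty_app_p, IH, Hu | lia..].
  - intros G Dt t t' A B bt et mt ft bu eu mu fu _ IHt _ IHu x u D bw ew mw fw Hw. simpl.
    apply typed_many_app_inv in Hw as (D1 & D2 & b1 & e1 & m1 & f1 & b2 & e2 & m2 & f2
                                       & -> & H1 & H2 & -> & -> & -> & ->).
    destruct (IHt x u D1 _ _ _ _ H1) as (G1 & HG1 & HT).
    destruct (IHu x u D2 _ _ _ _ H2) as (G2 & HG2 & HU).
    eapply ty_conv; [eapply typed_counters; [econstructor; [exact HT | exact HU] | lia..]
                    | | reflexivity].
    rewrite HG1, HG2. symmetry. apply subst_ctx_union.
  - intros t t' x u D bu eu mu fu Hu. simpl.
    apply typed_many_nil_inv in Hu as (-> & -> & -> & -> & ->).
    rewrite subst_ctx_empty. constructor.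
  - intros G Dt t p t' s A bt et mt ft ep mp fp bu eu mu fu _ IHt Hp _ IHu x u D bw ew mw fw Hw.
    simpl. apply typed_many_app_inv in Hw as (D1 & D2 & b1 & e1 & m1 & f1 & b2 & e2 & m2 & f2
                                              & -> & H1 & H2 & -> & -> & -> & ->).
    destruct (IHu x u D2 _ _ _ _ H2) as (G' & HG' & HU).
    eapply ty_conv;
      [eapply typed_counters;
         [eapply ty_match; [apply IHt, H1 | rewrite restr_subst_ctx; exact Hp | exact HU] | lia..]
      | | reflexivity].
    rewrite HG', <- subst_ctx_remove. symmetry. apply subst_ctx_union.
  - intros G G' t s s' b e m f _ IH HG Hs x u D bu eu mu fu Hu.
    destruct (typed_many_conv Hu (symmetry (HG x))) as (D' & HD & Hu').
    eapply ty_conv; [apply IH, Hu' | | exact Hs].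
    rewrite HG, HD. reflexivity.
  - intros t x u D bu eu mu fu Hu.
    apply typed_many_nil_inv in Hu as (-> & -> & -> & -> & ->).
    exists ctx_empty. rewrite subst_ctx_empty. split; [reflexivity | constructor].
  - intros G Dt t s A b e m f b' e' m' f' _ IHt _ IHm x u D bu eu mu fu Hu.
    apply typed_many_app_inv in Hu as (D1 & D2 & b1 & e1 & m1 & f1 & b2 & e2 & m2 & f2
                                       & -> & H1 & H2 & -> & -> & -> & ->).
    destruct (IHm x u D2 _ _ _ _ H2) as (G' & HG' & HM).
    exists (ctx_union (subst_ctx x G D1) G'). split.
    + rewrite HG'. symmetry. apply subst_ctx_union.
    + eapply typed_many_counters; [constructor; [apply IHt, H1 | exact HM] | lia..].
Qed.

(** * Generation lemmas *)

Lemma typed_Lam_inv G p t s b e m f :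
  typed G (Lam p t) s b e m f ->
  (exists G0 s0 A b0 e0 m0 f0 ep mp fp,
     typed G0 t s0 b0 e0 m0 f0 /\ pty (restr G0 p) p A ep mp fp /\
     ctx_eqv (Defs.remove G0 p) G /\ ty_eqv (TArr A s0) s /\
     b = b0 + 1 /\ e = e0 + ep /\ m = m0 + mp /\ f = f0 + fp) \/
  (exists G0 s0 b0 e0 m0 f0,
     typed G0 t s0 b0 e0 m0 f0 /\ tight s0 /\ Forall tight_mty (restr G0 p) /\
     ctx_eqv (Defs.remove G0 p) G /\ ty_eqv TM s /\
     b = b0 /\ e = e0 /\ m = m0 /\ f = f0 + 1).
Proof.
  intros H. remember (Lam p t) as T eqn:HT. revert p t HT.
  induction H; intros ? ? HT; inversion HT; subst.
  - left. do 10 eexists. repeat split; eauto; reflexivity.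
  - right. do 6 eexists. repeat split; eauto; reflexivity.
  - edestruct IHtyped as [(G0 & s0 & A & b0 & e0 & m0 & f0 & ep & mp & fp
                           & ? & ? & HG & Hs & -> & -> & -> & ->)
                         | (G0 & s0 & b0 & e0 & m0 & f0 & ? & ? & ? & HG & Hs & -> & -> & -> & ->)];
      [reflexivity | |].
    + left. do 10 eexists. repeat split; eauto; etransitivity; eassumption.
    + right. do 6 eexists. repeat split; eauto; etransitivity; eassumption.
Qed.

Lemma typed_App_inv G t u s b e m f :
  typed G (App t u) s b e m f ->
  (exists G1 D A s1 bt et mt ft bu eu mu fu,
     typed G1 t (TArr A s1) bt et mt ft /\ typed_many D u A bu eu mu fu /\
     ctx_eqv (ctx_union G1 D) G /\ ty_eqv s1 s /\
     b = bt + bu /\ e = et + eu /\ m = mt + mu /\ f = ft + fu) \/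
  (exists G1 f1,
     typed G1 t TN b e m f1 /\ ctx_eqv G1 G /\ ty_eqv TN s /\ f = f1 + 1).
Proof.
  intros H. remember (App t u) as T eqn:HT. revert t u HT.
  induction H; intros ? ? HT; inversion HT; subst.
  - left. do 12 eexists. repeat split; eauto; reflexivity.
  - right. do 2 eexists. repeat split; eauto; reflexivity.
  - edestruct IHtyped as [(G1 & D & A & s1 & bt & et & mt & ft & bu & eu & mu & fu
                           & ? & ? & HG & Hs & -> & -> & -> & ->) | (G1 & f1 & ? & HG & Hs & ->)];
      [reflexivity | |].
    + left. do 12 eexists. repeat split; eauto; etransitivity; eassumption.
    + right. do 2 eexists. repeat split; eauto; etransitivity; eassumption.
Qed.

Lemma typed_Pair_inv G t u s b e m f :
  typed G (Pair t u) s b e m f ->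
  (exists G1 D A B bt et mt ft bu eu mu fu,
     typed_many G1 t A bt et mt ft /\ typed_many D u B bu eu mu fu /\
     ctx_eqv (ctx_union G1 D) G /\ ty_eqv (TProd A B) s /\
     b = bt + bu /\ e = et + eu /\ m = mt + mu /\ f = ft + fu) \/
  ty_eqv TM s.
Proof.
  intros H. remember (Pair t u) as T eqn:HT. revert t u HT.
  induction H; intros ? ? HT; inversion HT; subst.
  - left. do 12 eexists. repeat split; eauto; reflexivity.
  - right. reflexivity.
  - edestruct IHtyped as [(G1 & D & A & B & bt & et & mt & ft & bu & eu & mu & fu
                           & ? & ? & HG & Hs & -> & -> & -> & ->) | Hs]; [reflexivity | |].
    + left. do 12 eexists. repeat split; eauto; etransitivity; eassumption.
    + right. etransitivity; eassumption.
Qed.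

Lemma typed_Sub_inv G t p u s b e m f :
  typed G (Sub t p u) s b e m f ->
  exists G1 D s1 A bt et mt ft ep mp fp bu eu mu fu,
    typed G1 t s1 bt et mt ft /\ pty (restr G1 p) p A ep mp fp /\
    typed_many D u A bu eu mu fu /\
    ctx_eqv (ctx_union (Defs.remove G1 p) D) G /\ ty_eqv s1 s /\
    b = bt + bu /\ e = et + eu + ep /\ m = mt + mu + mp /\ f = ft + fu + fp.
Proof.
  intros H. remember (Sub t p u) as T eqn:HT. revert t p u HT.
  induction H; intros ? ? ? HT; inversion HT; subst.
  - do 15 eexists. repeat split; eauto; reflexivity.
  - edestruct IHtyped as (G1 & D & s1 & A & bt & et & mt & ft & ep & mp & fp & bu & eu & mu & fu
                          & ? & ? & ? & HG & Hs & -> & -> & -> & ->); [reflexivity |].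
    do 15 eexists. repeat split; eauto; etransitivity; eassumption.
Qed.

(* The typing of the list context around the hole can be reused for any other plugged term,
   possibly with extra hypotheses [D] on variables free outside [L]. *)
Lemma typed_plug_inv L G w s b e m f :
  typed G (plug L w) s b e m f ->
  exists Gw sw bw ew mw fw bL eL mL fL,
    typed Gw w sw bw ew mw fw /\ ty_eqv sw s /\
    b = bL + bw /\ e = eL + ew /\ m = mL + mw /\ f = fL + fw /\
    (forall D w' s' b' e' m' f',
       typed (ctx_union Gw (ctx_lift (bvL L) 0 D)) w' s' b' e' m' f' ->
       typed (ctx_union G D) (plug L w') s' (bL + b') (eL + e') (mL + m') (fL + f')).
Proof.
  revert G s b e m f. induction L as [|[p u] L IH]; simpl; intros G s b e m f H.
  - exists G, s, b, e, m, f, 0, 0, 0, 0. repeat split; [exact H | reflexivity |].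
    intros D w' s' b' e' m' f'. rewrite ctx_lift_0. auto.
  - apply typed_Sub_inv in H as (G1 & D1 & s1 & A & bt & et & mt & ft & ep & mp & fp & bu & eu & mu & fu
                                 & H1 & Hp & Hu & HG & Hs & -> & -> & -> & ->).
    apply IH in H1 as (Gw & sw & bw & ew & mw & fw & bL & eL & mL & fL
                       & Hw & Hsw & -> & -> & -> & -> & Hplug).
    exists Gw, sw, bw, ew, mw, fw, (bL + bu), (eL + eu + ep), (mL + mu + mp), (fL + fu + fp).
    repeat split; [exact Hw | etransitivity; eassumption | lia.. |].
    intros D w' s' b' e' m' f' Hw'.
    rewrite <- ctx_lift_lift0 in Hw'. apply Hplug in Hw'.
    eapply ty_conv;
      [eapply typed_counters;
         [eapply ty_match; [exact Hw' | rewrite restr_union_ctx_lift; exact Hp | exact Hu] | lia..]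
      | | reflexivity].
    rewrite remove_union_ctx_lift, <- HG, <- !ctx_union_assoc, (ctx_union_comm D D1). reflexivity.
Qed.

(** * Subject reduction *)

Definition counters_decr (k : kind) (b e m b' e' m' : nat) : Prop :=
  match k with
  | KB => b = S b' /\ e' = e /\ m' = m
  | KE => b' = b /\ e = S e' /\ m' = m
  | KM => b' = b /\ e' = e /\ m = S m'
  end.

Definition typing_decr (k : kind) (t t' : term) : Prop :=
  forall G s b e m f, typed G t s b e m f ->
  exists b' e' m', typed G t' s b' e' m' f /\ counters_decr k b e m b' e' m'.

Lemma typing_decr_Lam k p t t' : typing_decr k t t' -> typing_decr k (Lam p t) (Lam p t').
Proof.
  intros IH G s b e m f H.
  apply typed_Lam_inv in H as [(G0 & s0 & A & b0 & e0 & m0 & f0 & ep & mp & fp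
                                & Ht & Hp & HG & Hs & -> & -> & -> & ->)
                               | (G0 & s0 & b0 & e0 & m0 & f0 & Ht & Htight & Hp & HG & Hs
                                  & -> & -> & -> & ->)];
    apply IH in Ht as (b' & e' & m' & Ht' & Hdecr).
  - exists (b' + 1), (e' + ep), (m' + mp). split.
    + eapply ty_conv; [apply ty_abs; eassumption | exact HG | exact Hs].
    + destruct k; simpl in *; lia.
  - exists b', e', m'. split.
    + eapply ty_conv; [eapply ty_abs_p; eassumption | exact HG | exact Hs].
    + exact Hdecr.
Qed.

Lemma typing_decr_App k t t' u : typing_decr k t t' -> typing_decr k (App t u) (App t' u).
Proof.
  intros IH G s b e m f H.
  apply typed_App_inv in H as [(G1 & D & A & s1 & bt & et & mt & ft & bu & eu & mu & fu
                                & Ht & Hu & HG & Hs & -> & -> & -> & ->)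
                               | (G1 & f1 & Ht & HG & Hs & ->)];
    apply IH in Ht as (b' & e' & m' & Ht' & Hdecr).
  - exists (b' + bu), (e' + eu), (m' + mu). split.
    + eapply ty_conv; [eapply ty_app; eassumption | exact HG | exact Hs].
    + destruct k; simpl in *; lia.
  - exists b', e', m'. split.
    + eapply ty_conv; [apply ty_app_p; eassumption | exact HG | exact Hs].
    + exact Hdecr.
Qed.

Lemma typing_decr_Sub_l k t t' p u :
  typing_decr k t t' -> typing_decr k (Sub t p u) (Sub t' p u).
Proof.
  intros IH G s b e m f H.
  apply typed_Sub_inv in H as (G1 & D & s1 & A & bt & et & mt & ft & ep & mp & fp & bu & eu & mu & fu
                               & Ht & Hp & Hu & HG & Hs & -> & -> & -> & ->).
  apply IH in Ht as (b' & e' & m' & Ht' & Hdecr).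
  exists (b' + bu), (e' + eu + ep), (m' + mu + mp). split.
  - eapply ty_conv; [eapply ty_match; eassumption | exact HG | exact Hs].
  - destruct k; simpl in *; lia.
Qed.

Lemma typing_decr_Sub_r k t p u u' :
  p <> PVar -> typing_decr k u u' -> typing_decr k (Sub t p u) (Sub t p u').
Proof.
  intros Hpair IH G s b e m f H.
  apply typed_Sub_inv in H as (G1 & D & s1 & A & bt & et & mt & ft & ep & mp & fp & bu & eu & mu & fu
                               & Ht & Hp & Hu & HG & Hs & -> & -> & -> & ->).
  destruct p as [|p1 p2]; [contradiction|].
  destruct (pty_PPair_singleton _ _ _ _ _ _ _ Hp) as (X & ->).
  apply typed_many_singleton_inv, IH in Hu as (b' & e' & m' & Hu' & Hdecr).
  exists (bt + b'), (et + e' + ep), (mt + m' + mp). split.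
  - eapply ty_conv; [eapply ty_match; [exact Ht | exact Hp | apply typed_many_singleton, Hu']
                    | exact HG | exact Hs].
  - destruct k; simpl in *; lia.
Qed.

Lemma typing_decr_beta L p t u :
  typing_decr KB (App (plug L (Lam p t)) u) (plug L (Sub t p (lift (bvL L) 0 u))).
Proof.
  intros G s b e m f H.
  apply typed_App_inv in H as [(G1 & D & A & s1 & bt & et & mt & ft & bu & eu & mu & fu
                                & Hfun & Hu & HG & Hs & -> & -> & -> & ->) | (G1 & f1 & Hfun & _)].
  - apply typed_plug_inv in Hfun as (Gw & sw & bw & ew & mw & fw & bL & eL & mL & fL
                                     & Hlam & Hsw & -> & -> & -> & -> & Hplug).
    apply typed_Lam_inv in Hlam as [(G0 & s0 & A0 & b0 & e0 & m0 & f0 & ep & mp & fp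
                                     & Ht & Hp & HG0 & Harr & -> & -> & -> & ->)
                                    | (G0 & s0 & b0 & e0 & m0 & f0 & _ & _ & _ & _ & HTM & _)].
    + destruct (ty_eqv_TArr_inv _ _ _ (transitivity Harr Hsw)) as (A' & s' & [= <- <-] & HA & Hs0).
      destruct (typed_many_conv Hu (symmetry HA)) as (D' & HD & Hu').
      apply (proj2 typed_lift) with (d := bvL L) (c := 0) in Hu'.
      assert (Hbody : typed (ctx_union Gw (ctx_lift (bvL L) 0 D)) (Sub t p (lift (bvL L) 0 u)) s0
                        (b0 + bu) (e0 + eu + ep) (m0 + mu + mp) (f0 + fu + fp)).
      { eapply ty_conv; [eapply ty_match; eassumption | | reflexivity].
        rewrite HG0, HD. reflexivity. }
      apply Hplug in Hbody.
      exists (bL + (b0 + bu)), (eL + (e0 + eu + ep)), (mL + (m0 + mu + mp)). split.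
      * eapply typed_counters;
          [eapply ty_conv; [exact Hbody | exact HG | etransitivity; eassumption] | lia..].
      * simpl. lia.
    + apply ty_eqv_TM_inv in HTM as ->. apply ty_eqv_TM_inv in Hsw as [=].
  - apply typed_plug_inv in Hfun as (Gw & sw & ? & ? & ? & ? & ? & ? & ? & ? & Hlam & Hsw & _).
    symmetry in Hsw. apply ty_eqv_TN_inv in Hsw as ->.
    apply typed_Lam_inv in Hlam as [(? & ? & ? & ? & ? & ? & ? & ? & ? & ? & _ & _ & _ & Harr & _)
                                    | (? & ? & ? & ? & ? & ? & _ & _ & _ & _ & HTM & _)].
    + apply ty_eqv_TArr_inv in Harr as (? & ? & [=] & _).
    + apply ty_eqv_TM_inv in HTM as [=].
Qed.

Lemma typed_match_split {G t s p1 p2 Gu1 u1 A1 Gu2 u2 A2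
    bt et mt ft e1 m1 f1 e2 m2 f2 b1 e1' m1' f1' b2 e2' m2' f2'} d :
  typed G t s bt et mt ft ->
  pty (restr G p1) p1 A1 e1 m1 f1 ->
  pty (restr (Defs.remove G p1) p2) p2 A2 e2 m2 f2 ->
  typed_many Gu1 u1 A1 b1 e1' m1' f1' ->
  typed_many Gu2 u2 A2 b2 e2' m2' f2' ->
  typed (ctx_union (ctx_union (ctx_lift d 0 (Defs.remove G (PPair p1 p2))) Gu1) Gu2)
    (Sub (Sub (lift d (psize p1 + psize p2) t) p1 (lift (psize p2) 0 u1)) p2 u2) s
    (bt + b1 + b2) (et + e1' + e1 + e2' + e2) (mt + m1' + m1 + m2' + m2)
    (ft + f1' + f1 + f2' + f2).
Proof.
  intros Ht Hp1 Hp2 Hu1 Hu2.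
  apply (proj1 typed_lift) with (d := d) (c := psize p1 + psize p2) in Ht.
  apply (proj2 typed_lift) with (d := psize p2) (c := 0) in Hu1.
  assert (Hp1' : pty (restr (ctx_lift d (psize p1 + psize p2) G) p1) p1 A1 e1 m1 f1)
    by (rewrite restr_ctx_lift by lia; exact Hp1).
  eapply ty_match in Ht; [| exact Hp1' | exact Hu1].
  assert (Hp2' : pty (restr (ctx_union (Defs.remove (ctx_lift d (psize p1 + psize p2) G) p1)
                                       (ctx_lift (psize p2) 0 Gu1)) p2) p2 A2 e2 m2 f2).
  { erewrite restr_ext; [exact Hp2|]. intros. ctx_pointwise. }
  eapply ty_match in Ht; [| exact Hp2' | exact Hu2].
  rewrite remove_union_ctx_lift, remove_remove in Ht.
  rewrite ctx_lift_remove. exact Ht.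
Qed.

Lemma typing_decr_match L t p1 p2 u1 u2 :
  typing_decr KM (Sub t (PPair p1 p2) (plug L (Pair u1 u2)))
    (plug L (Sub (Sub (lift (bvL L) (psize p1 + psize p2) t) p1 (lift (psize p2) 0 u1)) p2 u2)).
Proof.
  intros G s b e m f H.
  apply typed_Sub_inv in H as (G1 & D & s1 & A & bt & et & mt & ft & ep & mp & fp & bu & eu & mu & fu
                               & Ht & Hp & Hu & HG & Hs & -> & -> & -> & ->).
  apply pty_restr_PPair_inv in Hp as [(A1 & A2 & e1 & m1 & f1 & e2 & m2 & f2
                                       & Hp1 & Hp2 & -> & -> & -> & ->) | ->];
    apply typed_many_singleton_inv, typed_plug_inv in Hu
      as (Gw & sw & bw & ew & mw & fw & bL & eL & mL & fL & Hpair & Hsw & -> & -> & -> & -> & Hplug);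
    apply typed_Pair_inv in Hpair as [(Ga & Db & A' & B' & ba & ea & ma & fa & bb & eb & mb & fb
                                       & Hu1 & Hu2 & HGw & Hprod & -> & -> & -> & ->) | HTM].
  - destruct (ty_eqv_TProd_inv _ _ _ (transitivity Hprod Hsw)) as (? & ? & [= <- <-] & HA1 & HA2).
    destruct (typed_many_conv Hu1 HA1) as (Ga' & HGa & Hu1').
    destruct (typed_many_conv Hu2 HA2) as (Db' & HDb & Hu2').
    pose proof (typed_match_split (bvL L) Ht Hp1 Hp2 Hu1' Hu2') as Hsplit.
    eapply ty_conv in Hsplit; [apply Hplug in Hsplit | | reflexivity].
    + exists (bL + (bt + ba + bb)), (eL + (et + ea + e1 + eb + e2)),
             (mL + (mt + ma + m1 + mb + m2)).
      split; [|simpl; lia].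
      eapply typed_counters; [eapply ty_conv; [exact Hsplit | | exact Hs] | lia..].
      rewrite <- HG. apply ctx_union_comm.
    + rewrite <- HGw, HGa, HDb, <- ctx_union_assoc. apply ctx_union_comm.
  - apply ty_eqv_TM_inv in HTM as ->. apply ty_eqv_TM_inv in Hsw as [=].
  - destruct (ty_eqv_TProd_inv _ _ _ (transitivity Hprod Hsw)) as (? & ? & [=] & _).
  - apply ty_eqv_TM_inv in HTM as ->. apply ty_eqv_TM_inv in Hsw as [=].
Qed.

Lemma typing_decr_exp t u : typing_decr KE (Sub t PVar u) (subst 0 u t).
Proof.
  intros G s b e m f H.
  apply typed_Sub_inv in H as (G1 & D & s1 & A & bt & et & mt & ft & ep & mp & fp & bu & eu & mu & fu
                               & Ht & Hp & Hu & HG & Hs & -> & -> & -> & ->).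
  inversion Hp; subst.
  apply (proj1 typed_subst _ _ _ _ _ _ _ Ht 0) in Hu. rewrite subst_ctx_0 in Hu.
  exists (bt + bu), (et + eu), (mt + mu). split; [|simpl; lia].
  eapply typed_counters; [eapply ty_conv; [exact Hu | exact HG | exact Hs] | lia..].
Qed.

Lemma hred_typing_decr t k t' : hred t k t' -> typing_decr k t t'.
Proof.
  revert k t'. induction t as [n | p t IH | t1 _ t2 _ | t1 IH1 t2 _ | t1 IH1 p t2 IH2];
    intros k t' Hr; simpl in Hr.
  - contradiction.
  - destruct Hr as (s' & Hr & ->). apply typing_decr_Lam, IH, Hr.
  - contradiction.
  - destruct Hr as [(-> & L & p & s0 & -> & ->) | (_ & s' & Hr & ->)].
    + apply typing_decr_beta.
    + apply typing_decr_App, IH1, Hr.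
  - destruct Hr as [(-> & _ & p1 & p2 & L & u1 & u2 & -> & -> & ->)
                   | [(-> & _ & -> & ->)
                   | [(s' & Hr & ->)
                   | (_ & Hp & u' & Hr & ->)]]].
    + apply typing_decr_match.
    + apply typing_decr_exp.
    + apply typing_decr_Sub_l, IH1, Hr.
    + apply typing_decr_Sub_r; [exact Hp | apply IH2, Hr].
Qed.

Theorem lemma6 (G : ctx) (t t' : term) (s : ty) (b e m f : nat) (k : kind) :
  typed G t s b e m f -> hred t k t' ->
  exists b' e' m',
    typed G t' s b' e' m' f /\
    match k with
    | KB => b = S b' /\ e' = e /\ m' = m
    | KE => b' = b /\ e = S e' /\ m' = m
    | KM => b' = b /\ e' = e /\ m = S m'
    end.
Proof. intros Ht Hr. exact (hred_typing_decr t k t' Hr G s b e m f Ht). Qed.
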